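(* For every forward trie $\mathsf{T}_f$ with $n$ nodes, over any alphabet, the suffix array of $\mathsf{T}_f$ has size $O(n^2)$. Moreover, there exist forward tries $\mathsf{T}_f$ with $n$ nodes, for arbitrarily large $n$ and over an alphabet of constant size, whose suffix array has size $\Omega(n^2)$.
   Context: An alphabet $\Sigma$ is a finite ordered set of characters. A forward trie $\mathsf{T}_f$ is a rooted tree with $n$ nodes in which every edge is directed from parent to child and labeled by a single character of $\Sigma$, such that the edges leaving any node carry pairwise distinct labels. For nodes $u,v$ with $u$ an ancestor of $v$ (possibly $u=v$), $\mathrm{str}_f(u,v)$ is the string of labels read along the downward path from $u$ to $v$. Define $\mathrm{Suffix}(\mathsf{T}_f)=\{\mathrm{str}_f(u,\ell): \ell \text{ a leaf},\ u \text{ an ancestor of } \ell\}$. For a finite set $S$ of strings, its compact tree is obtained from the trie of all prefixes of strings in $S$ by deleting every non-root node that has exactly one child and merging its two incident edges into one edge labeled by the concatenation of their labels. The suffix tree $\mathsf{STree}(\mathsf{T}_f)$ is the compact tree of $\mathrm{Suffix}(\mathsf{T}_f)$. The suffix array of $\mathsf{T}_f$ is the array listing the leaves of $\mathsf{STree}(\mathsf{T}_f)$ in lexicographic order of the strings they spell; its size is the number of leaves of $\mathsf{STree}(\mathsf{T}_f)$. *)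

From mathcomp Require Import all_boot.
Set Implicit Arguments. Unset Strict Implicit. Unset Printing Implicit Defensive.

(* A forward trie is represented by the (duplicate-free) list of the strings
   spelled from the root to each of its nodes: since edges leaving a node carry
   pairwise distinct labels, a node is determined by this string, and the set
   of such strings is nonempty (contains the root's string [::]) and closed
   under prefixes.  The number of nodes n is [size T]. *)
Definition is_trie (Sigma : eqType) (T : seq (seq Sigma)) : bool :=
  [&& uniq T, [::] \in T & all (fun w => all (fun k => take k w \in T) (iota 0 (size w))) T].

Section Suffix.
Variable Sigma : eqType.
Implicit Types (T S : seq (seq Sigma)) (u v w : seq Sigma).

Definition ancestor u v := prefix u v.

(* str_f(u,v) for an ancestor u of v: labels along the downward path. *)
Definition str_f u v := drop (size u) v.

Definition trie_leaves T : seq (seq Sigma) :=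
  [seq l <- T | ~~ has (fun v => (v != l) && ancestor l v) T].

Definition Suffix T : seq (seq Sigma) :=
  undup (flatten [seq [seq str_f u l | u <- T & ancestor u l] | l <- trie_leaves T]).

Definition prefix_trie S : seq (seq Sigma) :=
  undup [seq take k s | s <- S, k <- iota 0 (size s).+1].

Definition nchildren S p : nat :=
  count (fun q => (size q == (size p).+1) && prefix p q) (prefix_trie S).

(* Nodes of the compact tree of S: the root together with the nodes of the
   prefix trie that do not have exactly one child (the deleted nodes are the
   non-root nodes with exactly one child). *)
Definition compact_nodes S : seq (seq Sigma) :=
  [seq p <- prefix_trie S | (p == [::]) || (nchildren S p != 1)].

Definition compact_leaves S : seq (seq Sigma) :=
  [seq p <- compact_nodes S |
     ~~ has (fun q => (q != p) && prefix p q) (compact_nodes S)].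

(* STree(T_f) is the compact tree of Suffix(T_f); the suffix array lists its
   leaves, so its size is the number of leaves. *)
Definition suffix_array_size T : nat := size (compact_leaves (Suffix T)).

End Suffix.

From mathcomp Require Import all_boot zify.
Set Implicit Arguments. Unset Strict Implicit. Unset Printing Implicit Defensive.

(* A leaf of the compact tree of a set S of strings is a node of
   the prefix trie with no proper extension there; taking a longest string of
   S extending it shows that it is itself a string of S.  So the suffix array
   has at most |Suffix(T_f)| entries, and Suffix(T_f) consists of the strings
   str_f(u, l), at most n choices for each of the (at most n) leaves l:
   the suffix array of an n-node trie has size at most n^2.
   Lower bound.  Over the binary alphabet take the "comb" trie whose leaves
   are 0^N 1 0^j 1 for j <= N: a spine 0^N 1 0^N 1 with N + 1 leaves hanging
   off it, so it has at most 3N + 4 nodes.  Its suffixes include the (N + 1)^2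
   distinct strings 0^i 1 0^j 1, and every suffix has at most two 1s and ends
   with its second 1 if it has one; hence no suffix properly extends
   0^i 1 0^j 1, which is therefore a leaf of the suffix tree.  This gives at
   least (N + 1)^2 >= n^2 / 16 leaves. *)

Section CompactTree.
Variable Sigma : eqType.
Implicit Types (S : seq (seq Sigma)) (p q s t : seq Sigma).

Lemma prefix_size_eq p s : prefix p s -> size s <= size p -> s = p.
Proof.
move=> /prefixP [r ->]; rewrite size_cat.
by case: r => [|x r] /=; [rewrite cats0 | lia].
Qed.

Lemma mem_prefix_trie S q :
  (q \in prefix_trie S) = has (fun s => prefix q s) S.
Proof.
rewrite /prefix_trie mem_undup; apply/allpairsPdep/hasP.
- by move=> [s [k [sS _ ->]]]; exists s => //; apply: prefix_take.
- move=> [s sS /prefixP [r Es]]; exists s, (size q); split => //.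
    by rewrite mem_iota Es size_cat; lia.
  by rewrite Es take_size_cat.
Qed.

Definition maximal S p := forall s, s \in S -> prefix p s -> size s <= size p.

Lemma maximal_prefix_trie S p : maximal S p -> maximal (prefix_trie S) p.
Proof.
move=> maxp q; rewrite mem_prefix_trie => /hasP [s sS qs] pq.
exact: leq_trans (size_prefix qs) (maxp s sS (prefix_trans pq qs)).
Qed.

(* A maximal node of the prefix trie has no child, hence survives in the
   compact tree. *)
Lemma maximal_compact_node S p :
  p \in prefix_trie S -> maximal S p -> p \in compact_nodes S.
Proof.
move=> pS /maximal_prefix_trie maxp; rewrite mem_filter pS andbT.
apply/orP; right; rewrite /nchildren.
suff -> : count (fun q => (size q == (size p).+1) && prefix p q)
            (prefix_trie S) = 0 by [].
apply/eqP; rewrite -leqn0 leqNgt -has_count; apply/hasPn => q qS.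
by apply/negP => /andP [/eqP sq /(maxp q qS)]; rewrite sq ltnn.
Qed.

Lemma maximal_compact_leaf S p : p \in S -> maximal S p -> p \in compact_leaves S.
Proof.
move=> pS maxp.
have pT : p \in prefix_trie S.
  by rewrite mem_prefix_trie; apply/hasP; exists p => //; apply: prefix_refl.
rewrite mem_filter maximal_compact_node // andbT; apply/hasPn => q qC.
have qT : q \in prefix_trie S by move: qC; rewrite mem_filter => /andP [].
apply/negP => /andP [/eqP qp pq]; apply: qp.
exact: prefix_size_eq pq (maximal_prefix_trie maxp qT pq).
Qed.

Lemma exists_maximal_ext S p s : s \in S -> prefix p s ->
  exists2 s', s' \in S & prefix p s' /\ maximal S s'.
Proof.
pose K := \max_(t <- S) size t.
have leK t : t \in S -> size t <= K.
  by move=> tS; apply: (@leq_bigmax_seq _ _ xpredT (fun t => size t)).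
move: {2}(K - size s) (leqnn (K - size s)) => k.
elim: k s => [|k IH] s slack sS ps.
  by exists s => //; split => // t tS _; have := leK t tS; lia.
have [/hasP [t tS /andP [st lt]] | /hasPn noext] :=
  boolP (has (fun t => prefix s t && (size s < size t)) S).
  by apply: (IH t) (prefix_trans ps st) => //; have := leK t tS; lia.
exists s => //; split => // t tS st.
by have := noext t tS; rewrite st /=; lia.
Qed.

Lemma compact_leaf_mem S p : p \in compact_leaves S -> p \in S.
Proof.
rewrite mem_filter => /andP [noext pC].
have : p \in prefix_trie S by move: pC; rewrite mem_filter => /andP [].
rewrite mem_prefix_trie => /hasP [s sS ps].
have [s' s'S [ps' maxs']] := exists_maximal_ext sS ps.
have s'C : s' \in compact_nodes S.
  apply: maximal_compact_node maxs'.
  by rewrite mem_prefix_trie; apply/hasP; exists s' => //; apply: prefix_refl.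
have [<- // | s'p] := eqVneq s' p.
by move/hasPn: noext => /(_ s' s'C); rewrite s'p ps'.
Qed.

Lemma size_compact_leaves S : size (compact_leaves S) <= size (undup S).
Proof.
apply: uniq_leq_size; first by rewrite !filter_uniq // undup_uniq.
by move=> p /compact_leaf_mem; rewrite mem_undup.
Qed.

(* Each leaf contributes at most n suffixes, so |Suffix(T)| <= n^2. *)
Lemma size_Suffix (T : seq (seq Sigma)) : size (Suffix T) <= size T ^ 2.
Proof.
rewrite /Suffix; apply: leq_trans (size_undup _) _.
rewrite size_flatten /shape -map_comp sumnE big_map expnS expn1.
apply: (@leq_trans (\sum_(l <- trie_leaves T) size T)).
  by apply: leq_sum => l _; rewrite /= size_map size_filter count_size.
by rewrite big_const_seq count_predT iter_addn_0 leq_mul2l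
           size_filter count_size orbT.
Qed.

Lemma suffix_array_size_le (T : seq (seq Sigma)) :
  suffix_array_size T <= size T ^ 2.
Proof.
apply: leq_trans (size_compact_leaves _) _.
by rewrite undup_id ?undup_uniq // size_Suffix.
Qed.

End CompactTree.

Definition ends_at_second_one (s : seq bool) :=
  (count id s <= 2) && ((count id s == 2) ==> last false s).

Lemma two_ones_maximal (w s : seq bool) :
  count id w = 2 -> ends_at_second_one s -> prefix w s -> s = w.
Proof.
move=> cw /andP [c2 last2] /prefixP [r Es]; subst s.
move: c2 last2; rewrite count_cat cw => c2.
have {c2} cr : count id r = 0 by lia.
rewrite cr addn0 eqxx /= last_cat.
case: r cr => [|y r] cr lastr; first by rewrite cats0.
suff : has id (y :: r) by rewrite has_count cr.
by apply/hasP; exists (last y r) => //; apply: mem_last.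
Qed.

Lemma ends_at_second_one_drop k s :
  ends_at_second_one s -> ends_at_second_one (drop k s).
Proof.
move=> /andP [c2 last2].
have cd : count id (drop k s) <= count id s.
  by rewrite -{2}(cat_take_drop k s) count_cat leq_addl.
apply/andP; split; first lia.
apply/implyP => /eqP cd2; have cs : count id s = 2 by lia.
move: last2; rewrite cs eqxx /= -{1}(cat_take_drop k s) last_cat.
by case: (drop k s) cd2.
Qed.

Definition two_ones (i j : nat) : seq bool :=
  nseq i false ++ true :: (nseq j false ++ [:: true]).

Lemma size_two_ones i j : size (two_ones i j) = i + j + 2.
Proof. by rewrite size_cat size_nseq /= size_cat size_nseq /=; lia. Qed.

Lemma count_two_ones i j : count id (two_ones i j) = 2.
Proof. by rewrite count_cat count_nseq /= count_cat count_nseq. Qed.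

Lemma two_ones_ends i j : ends_at_second_one (two_ones i j).
Proof. by rewrite /ends_at_second_one count_two_ones /= last_cat /= last_cat. Qed.

Lemma two_ones_inj i j i' j' : two_ones i j = two_ones i' j' -> i = i' /\ j = j'.
Proof.
have index_two_ones k l : index true (two_ones k l) = k by elim: k => //= k ->.
move=> E; have ii' : i = i' by rewrite -(index_two_ones i j) E index_two_ones.
by split => //; have := congr1 size E; rewrite !size_two_ones; lia.
Qed.

Lemma drop_two_ones N i j : i <= N -> drop (N - i) (two_ones N j) = two_ones i j.
Proof.
move=> iN; rewrite /two_ones -(subnK iN) nseqD -catA.
by rewrite drop_size_cat ?size_nseq // subnK.
Qed.

Lemma take_two_ones N j k : j <= N -> k <= N + j + 1 ->
  take k (two_ones N j) = take k (two_ones N N).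
Proof.
move=> jN kle; pose stem := nseq N false ++ true :: nseq j false.
have -> : two_ones N j = stem ++ [:: true] by rewrite /two_ones -catA.
have -> : two_ones N N = stem ++ (nseq (N - j) false ++ [:: true]).
  by rewrite /two_ones -catA /= catA -nseqD subnKC.
have kstem : k <= size stem by rewrite size_cat /= !size_nseq; lia.
by rewrite !(takel_cat _ kstem).
Qed.

Section Comb.
Variable N : nat.

Definition comb_leaves := [seq two_ones N j | j <- iota 0 N.+1].
Definition comb := prefix_trie comb_leaves.

Lemma comb_is_trie : is_trie comb.
Proof.
apply/and3P; split; first exact: undup_uniq.
  by rewrite mem_prefix_trie; apply/hasP; exists (two_ones N 0);
    [apply: map_f; rewrite mem_iota | apply: prefix0s].
apply/allP => w; rewrite mem_prefix_trie => /hasP [s sS ws].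
apply/allP => k _; rewrite mem_prefix_trie; apply/hasP; exists s => //.
exact: prefix_trans (prefix_take _ _) ws.
Qed.

Lemma mem_comb q : q \in comb -> exists2 j, j <= N & prefix q (two_ones N j).
Proof.
rewrite mem_prefix_trie => /hasP [s /mapP [j jN ->] qs]; exists j => //.
by move: jN; rewrite mem_iota; lia.
Qed.

Lemma leaf_comb j : j <= N -> two_ones N j \in comb.
Proof.
move=> jN; rewrite mem_prefix_trie; apply/hasP; exists (two_ones N j).
  by apply: map_f; rewrite mem_iota; lia.
exact: prefix_refl.
Qed.

(* The comb has at most 3N + 4 nodes: prefixes of the spine 0^N 1 0^N 1,
   plus the N + 1 leaves. *)
Lemma size_comb : size comb <= 3 * N + 4.
Proof.
pose spine := [seq take k (two_ones N N) | k <- iota 0 (2 * N + 3)].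
have -> : 3 * N + 4 = size (spine ++ comb_leaves).
  by rewrite size_cat !size_map !size_iota; lia.
apply: uniq_leq_size; first exact: undup_uniq.
move=> q /mem_comb [j jN qj]; rewrite mem_cat.
have qsize := size_prefix qj; rewrite size_two_ones in qsize.
have [qleaf | qshort] := eqVneq (size q) (N + j + 2).
  rewrite -(prefix_size_eq qj) ?size_two_ones ?qleaf // orbC map_f //.
  by rewrite mem_iota; lia.
apply/orP; left; apply/mapP; exists (size q); first by rewrite mem_iota; lia.
rewrite -(@take_two_ones N j) //; last by lia.
by move: qj; rewrite prefixE => /eqP.
Qed.

Lemma comb_leaves_uniq : uniq comb_leaves.
Proof.
by rewrite map_inj_in_uniq ?iota_uniq // => a b _ _ /two_ones_inj [].
Qed.

Lemma size_comb_gt : N < size comb.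
Proof.
rewrite -[N.+1](size_iota 0) -(size_map (two_ones N)).
apply: uniq_leq_size comb_leaves_uniq _ => q /mapP [j jN ->].
by apply: leaf_comb; move: jN; rewrite mem_iota; lia.
Qed.

Lemma comb_leaf_ext j : j <= N -> forall v, v \in comb ->
  prefix (two_ones N j) v -> v = two_ones N j.
Proof.
move=> jN v /mem_comb [j' _ vj'] lv.
have e : two_ones N j' = two_ones N j.
  by apply: two_ones_maximal (two_ones_ends _ _) (prefix_trans lv vj');
     apply: count_two_ones.
by apply: prefix_size_eq lv _; rewrite -e size_prefix.
Qed.

Lemma trie_leaves_comb j : j <= N -> two_ones N j \in trie_leaves comb.
Proof.
move=> jN; rewrite mem_filter leaf_comb // andbT.
apply/hasPn => v vT; apply/negP => /andP [ne lv].
by move: ne; rewrite (comb_leaf_ext jN vT lv) eqxx.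
Qed.

Lemma two_ones_Suffix i j : i <= N -> j <= N -> two_ones i j \in Suffix comb.
Proof.
move=> iN jN; rewrite mem_undup; apply/flatten_mapP.
exists (two_ones N j); first exact: trie_leaves_comb.
apply/mapP; exists (take (N - i) (two_ones N j)).
  rewrite mem_filter /ancestor prefix_take mem_prefix_trie; apply/hasP.
  by exists (two_ones N j); [apply: map_f; rewrite mem_iota; lia | apply: prefix_take].
rewrite /str_f size_takel ?drop_two_ones // size_two_ones; lia.
Qed.

Lemma Suffix_comb_ends s : s \in Suffix comb -> ends_at_second_one s.
Proof.
rewrite mem_undup => /flatten_mapP [l lL /mapP [u _ ->]].
apply: ends_at_second_one_drop.
move: lL; rewrite mem_filter => /andP [noext /mem_comb [j jN lj]].
have [<- | ne] := eqVneq (two_ones N j) l; first exact: two_ones_ends.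
by move/hasPn: noext => /(_ _ (leaf_comb jN)); rewrite /ancestor ne lj.
Qed.

Lemma suffix_array_size_comb : N.+1 ^ 2 <= suffix_array_size comb.
Proof.
pose W := [seq two_ones i j | i <- iota 0 N.+1, j <- iota 0 N.+1].
have -> : N.+1 ^ 2 = size W by rewrite size_allpairs size_iota.
apply: uniq_leq_size.
  apply: allpairs_uniq; rewrite ?iota_uniq // => [[a b] [c d]] _ _ /=.
  by case/two_ones_inj => -> ->.
move=> x /allpairsP [[i j] [iN jN ->]].
move: iN jN; rewrite !mem_iota => /andP [_ iN] /andP [_ jN].
apply: maximal_compact_leaf; first by apply: two_ones_Suffix; lia.
move=> s sS ps; rewrite (two_ones_maximal (count_two_ones i j) _ ps) //.
exact: Suffix_comb_ends.
Qed.

End Comb.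

Theorem corollary1 :
  (exists c : nat, forall (Sigma : finType) (T : seq (seq Sigma)),
      is_trie T -> suffix_array_size T <= c * (size T) ^ 2)
  /\
  (exists (Sigma : finType) (c : nat), 0 < c /\
     forall N : nat, exists T : seq (seq Sigma),
       [/\ is_trie T, N <= size T & (size T) ^ 2 <= c * suffix_array_size T]).
Proof.
split.
  by exists 1 => Sigma T _; rewrite mul1n suffix_array_size_le.
exists bool, 16; split => // N; exists (comb N); split.
- exact: comb_is_trie.
- exact: ltnW (size_comb_gt N).
- have small := size_comb N; have large := suffix_array_size_comb N.
  apply: (@leq_trans ((3 * N + 4) ^ 2)); first by rewrite leq_exp2r.
  apply: (@leq_trans (16 * N.+1 ^ 2)); last by rewrite leq_mul2l large orbT.
  rewrite !expnS !expn0 !muln1; nia.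
Qed.
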